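(* Let $E[\mathscr{T}]$ be a stable locally $L^0$-convex module and let $E^\ast$ be the set of all continuous $L^0$-module morphisms $\mu:E\rightarrow L^0$. The collection of sets \[ U_{\{F_k\},\{A_k\},\varepsilon}:=\{x\in E\colon \sum 1_{A_k}\underset{\mu\in F_k}{\operatorname{ess\,sup}}|\mu(x)|<\varepsilon\}, \] where $\{A_k\}\in p(\Omega)$, $\{F_k\}$ is a countable collection of non-empty finite subsets of $E^\ast$ and $\varepsilon\in L^0$ with $\varepsilon>0$, is a neighborhood base of $0\in E$ for a stable locally $L^0$-convex topology (called the stable weak topology $\sigma_s(E,E^\ast)$).
   Context: $(\Omega,\Sigma,\mathbb{P})$ is a probability space, $L^0$ is the set of equivalence classes (modulo a.s. equality) of $\Sigma$-measurable real random variables, $\mathcal{F}$ is the associated measure algebra, and $p(\Omega)$ denotes the set of (countable) partitions of $\Omega$ in $\mathcal{F}$. An $L^0$-module $E$ has the countable concatenation property if for every sequence $\{x_k\}\subset E$ and every partition $\{A_k\}\in p(\Omega)$ there is a unique $x=\sum 1_{A_k}x_k\in E$ with $1_{A_k}x=1_{A_k}x_k$ for all $k$. A subset $S$ is stable if $\sum 1_{A_k}x_k\in S$ for all $\{x_k\}\subset S$, $\{A_k\}\in p(\Omega)$; a collection $\mathscr{C}$ of subsets is stable if each member is stable and $\sum 1_{A_k}S_k\in\mathscr{C}$ for all $\{S_k\}\subset\mathscr{C}$, $\{A_k\}\in p(\Omega)$. A stable locally $L^0$-convex module is a topological $L^0$-module with the countable concatenation property having a neighborhood base of $0$ which is a stable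 collection of $L^0$-convex, $L^0$-absorbing and $L^0$-balanced sets. $\operatorname{ess\,sup}$ denotes the essential supremum in $L^0$. *)

From HB Require Import structures.
From mathcomp Require Import all_boot all_order all_algebra.
From mathcomp Require Import all_classical all_reals all_analysis.
Set Implicit Arguments. Unset Strict Implicit. Unset Printing Implicit Defensive.
Import Order.TTheory GRing.Theory Num.Theory.
Local Open Scope classical_set_scope.
Local Open Scope ring_scope.

Section L0def.
Variables (d : measure_display) (T : measurableType d) (R : realType)
  (P : probability T R).

Definition aeq (f g : T -> R) : Prop := {ae P, forall t, f t = g t}.

(** L^0 = equivalence classes (mod a.s. equality) of measurable real functions *)
Definition L0class (f : T -> R) : set (T -> R) :=
  [set g | measurable_fun setT g /\ aeq f g].
Definition isL0class (C : set (T -> R)) : Prop :=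
  exists f, measurable_fun setT f /\ C = L0class f.
Definition L0 : Type := sig isL0class.

Definition rep (x : L0) : T -> R := proj1_sig (cid (proj2_sig x)).

Lemma L0class_is (f : T -> R) : measurable_fun setT f -> isL0class (L0class f).
Proof. by move=> mf; exists f. Qed.

(** the class of a function (of 0 if the function is not measurable) *)
Definition cls (f : T -> R) : L0 :=
  match pselect (measurable_fun setT f) with
  | left mf => exist _ _ (L0class_is mf)
  | right _ => exist _ _ (L0class_is (@measurable_cst _ _ T R setT 0))
  end.

Definition L0zero : L0 := cls (fun _ => 0).
Definition L0one : L0 := cls (fun _ => 1).
Definition L0add (x y : L0) : L0 := cls (fun t => rep x t + rep y t).
Definition L0opp (x : L0) : L0 := cls (fun t => - rep x t).
Definition L0mul (x y : L0) : L0 := cls (fun t => rep x t * rep y t).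
Definition L0abs (x : L0) : L0 := cls (fun t => `|rep x t|).
Definition L0ind (A : set T) : L0 := cls (\1_A).
Definition L0le (x y : L0) : Prop := {ae P, forall t, rep x t <= rep y t}.
Definition L0lt (x y : L0) : Prop := {ae P, forall t, rep x t < rep y t}.

Definition is_esssup (S : set L0) (s : L0) : Prop :=
  (forall y, S y -> L0le y s) /\
  (forall u, (forall y, S y -> L0le y u) -> L0le s u).

(** {A_k} in p(Omega): a countable partition of Omega in the measure algebra,
    given by representatives A_k in Sigma *)
Definition partition (A : nat -> set T) : Prop :=
  (forall k, measurable (A k)) /\
  (forall i j, i <> j -> P (A i `&` A j) = 0%E) /\
  P (\bigcup_k A k) = 1%E.

(** y = sum_k 1_{A_k} s_k in L^0 *)
Definition concatL0 (A : nat -> set T) (s : nat -> L0) (y : L0) : Prop :=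
  forall k, L0mul (L0ind (A k)) y = L0mul (L0ind (A k)) (s k).

Definition L0nbhd (r : L0) (N : set L0) : Prop :=
  exists eps, L0lt L0zero eps /\ [set s | L0le (L0abs (L0add s (L0opp r))) eps] `<=` N.

Record L0module := {
  Ecar :> Type;
  e0 : Ecar;
  eadd : Ecar -> Ecar -> Ecar;
  eopp : Ecar -> Ecar;
  esmul : L0 -> Ecar -> Ecar;
  eaddA : forall x y z, eadd x (eadd y z) = eadd (eadd x y) z;
  eaddC : forall x y, eadd x y = eadd y x;
  eadd0 : forall x, eadd e0 x = x;
  eaddN : forall x, eadd (eopp x) x = e0;
  esmulA : forall r s x, esmul (L0mul r s) x = esmul r (esmul s x);
  esmul1 : forall x, esmul L0one x = x;
  esmulDr : forall r x y, esmul r (eadd x y) = eadd (esmul r x) (esmul r y);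
  esmulDl : forall r s x, esmul (L0add r s) x = eadd (esmul r x) (esmul s x)
}.

Section Module.
Variable M : L0module.

(** z = sum_k 1_{A_k} x_k in E *)
Definition concatE (A : nat -> set T) (x : nat -> M) (z : M) : Prop :=
  forall k, esmul (L0ind (A k)) z = esmul (L0ind (A k)) (x k).

Definition ccp : Prop :=
  forall (A : nat -> set T) (x : nat -> M), partition A ->
    exists! z, concatE A x z.

Definition stable_set (S : set M) : Prop :=
  forall (A : nat -> set T) (x : nat -> M) z, partition A ->
    (forall k, S (x k)) -> concatE A x z -> S z.

Definition concat_sets (A : nat -> set T) (S : nat -> set M) : set M :=
  [set z | exists x : nat -> M, (forall k, S k (x k)) /\ concatE A x z].

Definition stable_collection (C : set (set M)) : Prop :=
  (forall S, C S -> stable_set S) /\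
  (forall (A : nat -> set T) (S : nat -> set M), partition A ->
     (forall k, C (S k)) -> C (concat_sets A S)).

Definition is_topology (tau : set (set M)) : Prop :=
  tau setT /\
  (forall F : set (set M), F `<=` tau -> tau (\bigcup_(U in F) U)) /\
  (forall U V, tau U -> tau V -> tau (U `&` V)).

Definition nbhd (tau : set (set M)) (x : M) (N : set M) : Prop :=
  exists O, tau O /\ O x /\ O `<=` N.

Definition nbhd_base (tau : set (set M)) (x : M) (B : set (set M)) : Prop :=
  (forall U, B U -> nbhd tau x U) /\
  (forall N, nbhd tau x N -> exists2 U, B U & U `<=` N).

Definition topological_L0module (tau : set (set M)) : Prop :=
  is_topology tau /\
  (forall x y W, nbhd tau (eadd x y) W ->
     exists U V, nbhd tau x U /\ nbhd tau y V /\
       forall u v, U u -> V v -> W (eadd u v)) /\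
  (forall r x W, nbhd tau (esmul r x) W ->
     exists N V, L0nbhd r N /\ nbhd tau x V /\
       forall s z, N s -> V z -> W (esmul s z)).

Definition L0convex (C : set M) : Prop :=
  forall x y lam, C x -> C y -> L0le L0zero lam -> L0le lam L0one ->
    C (eadd (esmul lam x) (esmul (L0add L0one (L0opp lam)) y)).

Definition L0absorbing (C : set M) : Prop :=
  forall x, exists lam, L0lt L0zero lam /\ exists2 c, C c & x = esmul lam c.

Definition L0balanced (C : set M) : Prop :=
  forall x lam, C x -> L0le (L0abs lam) L0one -> C (esmul lam x).

Definition stable_locally_L0convex (tau : set (set M)) : Prop :=
  topological_L0module tau /\ ccp /\
  exists B : set (set M), nbhd_base tau (e0 M) B /\ stable_collection B /\
    forall U, B U -> [/\ L0convex U, L0absorbing U & L0balanced U].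

Definition dual (tau : set (set M)) : set (M -> L0) :=
  [set mu | (forall x y, mu (eadd x y) = L0add (mu x) (mu y)) /\
            (forall r x, mu (esmul r x) = L0mul r (mu x)) /\
            (forall x N, L0nbhd (mu x) N -> nbhd tau x [set y | N (mu y)])].

Definition Uweak (F : nat -> set (M -> L0)) (A : nat -> set T) (eps : L0) : set M :=
  [set x | exists s : nat -> L0,
     (forall k, is_esssup [set L0abs (mu x) | mu in F k] (s k)) /\
     exists y, concatL0 A s y /\ L0lt y eps].

Definition weak_base (tau : set (set M)) : set (set M) :=
  [set U | exists (F : nat -> set (M -> L0)) (A : nat -> set T) (eps : L0),
     [/\ partition A,
         (forall k, [/\ F k `<=` dual tau, finite_set (F k) & F k !=set0]),
         L0lt L0zero eps &
         U = Uweak F A eps]].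

End Module.
End L0def.

(** Membership of [z] in [U_{F,A,eps}] amounts to some [h < eps] in [L^0]
    dominating [|mu z|] a.s. on [A_k] for every [mu] in [F_k]; since sums
    [sum_k 1_{A_k} s_k] exist and are read off a.s. on each [A_k], every property
    of the family becomes an a.s. pointwise inequality.  The family is directed
    (refine the two partitions, indexing pairs by Cantor pairing), satisfies
    [U_{eps/2} + U_{eps/2} ⊆ U_eps], consists of L^0-convex, balanced, absorbing
    and stable sets, and is closed under countable concatenation.  Hence the
    translates [z + U] form a topology with continuous addition, and scalar
    multiplication is continuous by
    [|s mu(x + v) - r mu x| <= |s - r| G + (|r| + |s - r|) |mu v|]
    with [G] a gauge of [x]. *)
From Pilot Require Import Defs.
From HB Require Import structures.
From mathcomp Require Import all_boot all_order all_algebra.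
From mathcomp Require Import all_classical all_reals all_analysis.
From mathcomp Require Import measurable_realfun ring lra.
From Stdlib Require Cantor.

Set Implicit Arguments. Unset Strict Implicit. Unset Printing Implicit Defensive.
Import Order.TTheory GRing.Theory Num.Theory.
Local Open Scope classical_set_scope.
Local Open Scope ring_scope.

Section RealBounds.
Variable R : realType.

Lemma norm_perturbed_product_le (s r a b delta G H : R) :
  `|s - r| <= delta -> `|a| <= G -> `|b| <= H ->
  `|s * (a + b) - r * a| <= delta * G + (`|r| + delta) * H.
Proof.
move=> sr aG bH.
have -> : s * (a + b) - r * a = (s - r) * a + s * b by ring.
apply: le_trans (ler_normD _ _) _; rewrite !normrM.
apply: lerD; apply: ler_pM => //.
by rewrite -[s](subrK r) addrC (le_trans (ler_normD _ _)) // lerD2l.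
Qed.

Lemma perturbed_product_bound_lt (e r G H : R) : 0 < e -> 0 <= G -> 0 <= H ->
  H < e / (2 * (`|r| + 2)) ->
  Num.min 1 (e / (2 * (G + 1))) * G + (`|r| + Num.min 1 (e / (2 * (G + 1)))) * H < e.
Proof.
move=> e0 G0 H0 He.
set delta := Num.min 1 _.
have delta1 : delta <= 1 by rewrite ge_min lexx.
have delta0 : 0 < delta by rewrite lt_min ltr01 divr_gt0 // mulr_gt0 //; lra.
have deltaG : delta * (2 * (G + 1)) <= e.
  by rewrite -ler_pdivlMr ?ge_min ?lexx ?orbT //; lra.
have HR : H * (2 * (`|r| + 2)) < e by rewrite -ltr_pdivlMr //; lra.
have r0 : 0 <= `|r| by [].
nra.
Qed.

Lemma scaled_gauge_lt (e G : R) : 0 < e -> 0 <= G -> e / (2 * (G + 1)) * G < e.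
Proof.
move=> e0 G0; have Gpos : 0 < 2 * (G + 1) by lra.
rewrite mulrAC ltr_pdivrMr //; nra.
Qed.

Lemma norm_convex_comb_le (l a b ha hb : R) : 0 <= l <= 1 ->
  `|a| <= ha -> `|b| <= hb -> `|l * a + (1 - l) * b| <= l * ha + (1 - l) * hb.
Proof.
move=> /andP[l0 l1] aha bhb; apply: le_trans (ler_normD _ _) _; rewrite !normrM.
rewrite (ger0_norm l0) (@ger0_norm _ (1 - l)) ?subr_ge0 //.
by apply: lerD; apply: ler_wpM2l; rewrite ?subr_ge0.
Qed.

Lemma convex_comb_lt (l a b e : R) : 0 <= l <= 1 -> a < e -> b < e ->
  l * a + (1 - l) * b < e.
Proof.
move=> /andP[l0 l1] ae be; have [l_lt1|] := ltP l 1; first nra.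
move=> l_ge1; have -> : l = 1 by lra.
by rewrite subrr mul0r addr0 mul1r.
Qed.

End RealBounds.

Lemma measurable_fun_inv d (T : measurableType d) (R : realType) (f : T -> R) :
  measurable_fun setT f -> measurable_fun setT (fun t => (f t)^-1).
Proof.
move=> mf; apply: measurableT_comp => //.
have nz : [set x : R | x != 0] = ~` [set 0].
  by apply/seteqP; split => x /= /eqP.
have -> : [set: R] = [set x : R | x != 0] `|` [set 0].
  by apply/seteqP; split => x //= _; have [->|] := eqVneq x 0; [right|left].
apply/measurable_funU => //.
  by apply: open_measurable; rewrite nz openC; exact: closed_eq.
split; last exact: measurable_fun_set1.
apply: open_continuous_measurable_fun; first by rewrite nz openC; exact: closed_eq.
by move=> x; rewrite inE => /= x0; exact: inv_continuous.
Qed.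

Lemma indic_in T (R : realType) (A : set T) t : A t -> \1_A t = 1 :> R.
Proof. by move=> At; rewrite indicE mem_set. Qed.

Lemma indic_notin T (R : realType) (A : set T) t : ~ A t -> \1_A t = 0 :> R.
Proof. by move=> At; rewrite indicE memNset. Qed.

Section Representatives.
Context (d : measure_display) (T : measurableType d) (R : realType)
  (P : probability T R).
Local Notation L0 := (L0 P).

Lemma rep_spec (x : L0) :
  measurable_fun setT (rep x) /\ proj1_sig x = L0class P (rep x).
Proof. by rewrite /rep; case: cid. Qed.

Lemma rep_measurable (x : L0) : measurable_fun setT (rep x).
Proof. by case: (rep_spec x). Qed.

Lemma L0_ae_ext (x y : L0) : {ae P, forall t, rep x t = rep y t} -> x = y.
Proof.
move=> xy; have [_ ex] := rep_spec x; have [_ ey] := rep_spec y.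
have e : proj1_sig x = proj1_sig y.
  rewrite ex ey; apply/seteqP; split => g [mg fg]; split => //;
    by apply: filterS2 fg xy => t; congruence.
move: x y e {xy ex ey} => [x px] [y py] /= e; subst y.
by rewrite (Prop_irrelevance px py).
Qed.

Lemma rep_cls (f : T -> R) : measurable_fun setT f ->
  {ae P, forall t, rep (cls P f) t = f t}.
Proof.
move=> mf; rewrite /cls; case: pselect => // mf'.
rewrite /rep /=; case: cid => g [mg e] /=.
have : L0class P g g by split => //; exact: aeW.
by rewrite -e => -[_]; apply: filterS => t ->.
Qed.

Lemma ae_and (Q1 Q2 : T -> Prop) :
  {ae P, forall t, Q1 t} -> {ae P, forall t, Q2 t} -> {ae P, forall t, Q1 t /\ Q2 t}.
Proof. by move=> h1 h2; apply: filterS2 h1 h2. Qed.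

Lemma ae_forall_countable (I : Type) (S : set I) (Q : I -> T -> Prop) :
  countable S -> (forall i, S i -> {ae P, forall t, Q i t}) ->
  {ae P, forall t, forall i, S i -> Q i t}.
Proof.
move=> /countable_injP[f finj] SQ.
suff : {ae P, forall t, forall n i, S i -> f i = n -> Q i t}.
  by apply: filterS => t SQt i Si; exact: SQt _ _ Si erefl.
apply: ae_foralln => n.
have [[i [Si fi]]|nex] := pselect (exists i, S i /\ f i = n).
  apply: filterS (SQ i Si) => t Qit j Sj fj.
  by have -> : j = i by apply: finj; rewrite ?inE // fi fj.
by apply: aeW => t i Si fi; exfalso; apply: nex; exists i.
Qed.

End Representatives.

Ltac solve_measurable := repeat first
  [ done | apply: rep_measurable | apply: measurable_cst | apply: measurable_indic
  | apply: measurable_funD | apply: measurable_funM | apply: measurable_funN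
  | apply: measurable_maxr | apply: measurable_minr | apply: measurable_fun_inv
  | apply: normr_measurable | apply: measurableT_comp ].

Section L0Calculus.
Context (d : measure_display) (T : measurableType d) (R : realType)
  (P : probability T R).
Local Notation L0 := (L0 P).

Lemma rep_add (x y : L0) : {ae P, forall t, rep (L0add x y) t = rep x t + rep y t}.
Proof. by apply: rep_cls; solve_measurable. Qed.

Lemma rep_opp (x : L0) : {ae P, forall t, rep (L0opp x) t = - rep x t}.
Proof. by apply: rep_cls; solve_measurable. Qed.

Lemma rep_mul (x y : L0) : {ae P, forall t, rep (L0mul x y) t = rep x t * rep y t}.
Proof. by apply: rep_cls; solve_measurable. Qed.

Lemma rep_abs (x : L0) : {ae P, forall t, rep (L0abs x) t = `|rep x t|}.
Proof. by apply: rep_cls; solve_measurable. Qed.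

Lemma rep_zero : {ae P, forall t, rep (L0zero P) t = 0}.
Proof. by apply: rep_cls; solve_measurable. Qed.

Lemma rep_one : {ae P, forall t, rep (L0one P) t = 1}.
Proof. by apply: rep_cls; solve_measurable. Qed.

Lemma rep_ind (A : set T) : measurable A ->
  {ae P, forall t, rep (L0ind P A) t = \1_A t}.
Proof. by move=> mA; apply: rep_cls; solve_measurable. Qed.

Lemma L0lt0P (eps : L0) : L0lt (L0zero P) eps <-> {ae P, forall t, 0 < rep eps t}.
Proof.
by split => h; apply: filterS2 h rep_zero => t; [move=> + <- | move=> + ->].
Qed.

Lemma L0le_trans (x y z : L0) : L0le x y -> L0le y z -> L0le x z.
Proof. by move=> xy yz; apply: filterS2 xy yz => t; exact: le_trans. Qed.

Lemma partition_cover (A : nat -> set T) : Defs.partition P A ->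
  {ae P, forall t, exists k, A k t}.
Proof.
move=> [mA [_ PA]]; exists (~` \bigcup_k A k); split.
- exact/measurableC/bigcupT_measurable.
- by rewrite probability_setC ?PA ?subee //; exact: bigcupT_measurable.
- by move=> t /= nA [k _ Akt]; apply: nA; exists k.
Qed.

Lemma partition_disjoint (A : nat -> set T) : Defs.partition P A ->
  {ae P, forall t i j, A i t -> A j t -> i = j}.
Proof.
move=> [mA [PAA _]]; apply: ae_foralln => i; apply: ae_foralln => j.
have [->|ij] := eqVneq i j; first exact: aeW.
exists (A i `&` A j); split; first exact: measurableI.
  exact/PAA/eqP.
by move=> t /= ijt; split; apply: contrapT => /= nA; apply: ijt => Ait Ajt; exfalso; exact: nA.
Qed.

Lemma partitionP (A : nat -> set T) : (forall k, measurable (A k)) ->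
  (forall i j, i <> j -> P (A i `&` A j) = 0%E) ->
  {ae P, forall t, exists k, A k t} -> Defs.partition P A.
Proof.
move=> mA PAA [N [mN PN sN]]; split => //; split => //.
have mU : measurable (\bigcup_k A k) by exact: bigcupT_measurable.
apply/eqP; rewrite eq_le probability_le1 //=.
rewrite -[1%E](sube0 1%E) -PN -probability_setC //.
apply: le_measure; rewrite ?inE //; first exact: measurableC.
move=> t /= Nt; apply: contrapT => nU; apply: Nt; apply: sN => -[k Akt].
by apply: nU; exists k.
Qed.

Definition refine_partition (A : nat -> set T) (B : nat -> nat -> set T) (n : nat) : set T :=
  A (Cantor.of_nat n).1 `&` B (Cantor.of_nat n).1 (Cantor.of_nat n).2.

Lemma refine_partition_pair A B i j :
  refine_partition A B (Cantor.to_nat (i, j)) = A i `&` B i j.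
Proof. by rewrite /refine_partition Cantor.cancel_of_to. Qed.

Lemma partition_refine A B : Defs.partition P A -> (forall i, Defs.partition P (B i)) ->
  Defs.partition P (refine_partition A B).
Proof.
move=> pA pB.
have mAB i j : measurable (A i `&` B i j).
  by apply: measurableI; [exact: pA.1 | exact: (pB i).1].
apply: partitionP.
- by move=> n; exact: mAB.
- move=> n m nm; rewrite /refine_partition.
  case En : (Cantor.of_nat n) => [i j]; case Em : (Cantor.of_nat m) => [i' j'] /=.
  have [ii'|ii'] := eqVneq i i'.
    subst i'; have [jj'|jj'] := eqVneq j j'.
      subst j'.
      by exfalso; apply: nm; rewrite -(Cantor.cancel_to_of n) -(Cantor.cancel_to_of m) En Em.
    apply: (@subset_measure0 _ _ _ P _ (B i j `&` B i j')).
    + exact: measurableI.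
    + by apply: measurableI; exact: (pB i).1.
    + by move=> t [[_ ?] [_ ?]].
    + by apply: (pB i).2.1; apply/eqP.
  apply: (@subset_measure0 _ _ _ P _ (A i `&` A i')).
  + exact: measurableI.
  + by apply: measurableI; exact: pA.1.
  + by move=> t [[? _] [? _]].
  + by apply: pA.2.1; apply/eqP.
- apply: filterS2 (partition_cover pA) (ae_foralln (fun i => partition_cover (pB i))).
  move=> t [i Ait] Bt; have [j Bijt] := Bt i.
  by exists (Cantor.to_nat (i, j)); rewrite refine_partition_pair.
Qed.

Lemma partition_disjointify (A : nat -> set T) : Defs.partition P A ->
  exists D : nat -> set T, [/\ forall k, measurable (D k),
    forall t, exists! k, D k t & {ae P, forall t k, A k t -> D k t}].
Proof.
move=> pA; set U := \bigcup_k A k.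
pose A' k := if k is 0 then A 0 `|` ~` U else A k.
have mA' k : measurable (A' k).
  case: k => [|k] /=; last exact: pA.1.
  by apply: measurableU; [exact: pA.1 | exact/measurableC/bigcupT_measurable/pA.1].
have cover t : exists! k, seqDU A' k t.
  have : (\bigcup_k A' k) t.
    have [[j _ Ajt]|nU] := pselect (U t); last by exists 0%N => //; right.
    by exists j => //; case: j Ajt => [|j] Ajt //=; left.
  rewrite seqDU_bigcup_eq => -[k _ Dkt]; exists k; split => // j Djt.
  by apply: (@trivIset_seqDU _ A') => //; exists t.
exists (seqDU A'); split => //; first by move=> k; exact: seqDU_measurable.
apply: filterS (partition_disjoint pA) => t AAt k Akt.
have [j [Djt _]] := cover t; have [A'jt _] := Djt.
suff <- : j = k by [].
case: j {Djt} A'jt => [[A0t|nU]|j /= Ajt].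
- exact: AAt A0t Akt.
- by case: nU; exists k.
- exact: AAt Ajt Akt.
Qed.

Lemma concatL0_ae (A : nat -> set T) (s : nat -> L0) (y : L0) :
  Defs.partition P A -> concatL0 A s y ->
  {ae P, forall t k, A k t -> rep y t = rep (s k) t}.
Proof.
move=> pA ys; apply: ae_foralln => k; have e := f_equal (@rep _ _ _ P) (ys k).
have := ae_and (rep_mul (L0ind P (A k)) y)
  (ae_and (rep_mul (L0ind P (A k)) (s k)) (rep_ind (pA.1 k))).
apply: filterS => t [ey [es ind]] Akt; move: ey es; rewrite e => ->.
by rewrite ind indic_in // !mul1r.
Qed.

Lemma concatL0_exists (A : nat -> set T) (s : nat -> L0) : Defs.partition P A ->
  exists y, concatL0 A s y.
Proof.
move=> pA; have [D [mD uD AD]] := partition_disjointify pA.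
pose k_ t := proj1_sig (cid (uD t)).
have k_P t : D (k_ t) t /\ forall k, D k t -> k_ t = k.
  by rewrite /k_; case: cid => k [Dkt uk]; split.
pose f t := rep (s (k_ t)) t.
have mf : measurable_fun setT f.
  have -> : [set: T] = \bigcup_k D k.
    by apply/seteqP; split => t // _; exists (k_ t) => //; exact: (k_P t).1.
  apply/measurable_fun_bigcup => // k.
  apply: (@eq_measurable_fun _ _ _ _ (D k) (rep (s k))).
    by move=> t; rewrite inE => Dkt; rewrite /f ((k_P t).2 k Dkt).
  exact: measurable_funS (rep_measurable _).
exists (cls P f) => k; apply: L0_ae_ext.
have := ae_and (rep_mul (L0ind P (A k)) (cls P f))
  (ae_and (rep_mul (L0ind P (A k)) (s k)) (ae_and (rep_ind (pA.1 k))
  (ae_and (rep_cls P mf) AD))).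
apply: filterS => t [-> [-> [-> [-> ADt]]]].
have [Akt|nAkt] := pselect (A k t); last by rewrite indic_notin // !mul0r.
by rewrite /f ((k_P t).2 k (ADt k Akt)).
Qed.

Lemma esssup_seq (l : seq {classic L0}) : l != [::] ->
  exists s, is_esssup [set y | y \in l] s.
Proof.
elim: l => // a l IH _; have [->|/IH[s [ls sl]]] := eqVneq l [::].
  exists a; split; last by move=> u; apply; rewrite /= inE.
  by move=> y /=; rewrite inE => /eqP ->; exact: aeW.
pose m := cls P (fun t => Num.max (rep a t) (rep s t)).
have rm : {ae P, forall t, rep m t = Num.max (rep a t) (rep s t)}.
  by apply: rep_cls; solve_measurable.
exists m; split.
  move=> y /=; rewrite inE => /orP[/eqP ->|yl].
    by apply: filterS rm => t ->; rewrite le_max lexx.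
  by apply: L0le_trans (ls y yl) _; apply: filterS rm => t ->; rewrite le_max lexx orbT.
move=> u lu.
have au : L0le a u by apply: lu; rewrite /= inE eqxx.
have su : L0le s u by apply: sl => y yl; apply: lu; rewrite /= inE yl orbT.
by apply: filterS (ae_and rm (ae_and au su)) => t [-> [au_t su_t]]; rewrite ge_max au_t su_t.
Qed.

Lemma esssup_finite (S : set L0) : finite_set S -> S !=set0 ->
  exists s, is_esssup S s.
Proof.
move=> /(@finite_seqP {classic L0})[l ->] [y ly]; apply: esssup_seq.
by apply: contraTneq ly => ->.
Qed.

Lemma esssup_le_on (S : set L0) (s h : L0) (A : set T) : measurable A ->
  is_esssup S s -> (forall y, S y -> {ae P, forall t, A t -> rep y t <= rep h t}) ->
  {ae P, forall t, A t -> rep s t <= rep h t}.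
Proof.
move=> mA [Ss sS] Sh.
pose u := cls P (fun t => \1_A t * rep h t + (1 - \1_A t) * rep s t).
have ru : {ae P, forall t, rep u t = \1_A t * rep h t + (1 - \1_A t) * rep s t}.
  by apply: rep_cls; solve_measurable.
have : L0le s u.
  apply: sS => y Sy; apply: filterS (ae_and (Ss y Sy) (ae_and ru (Sh y Sy))).
  move=> t [ys [-> yh]]; have [At|nAt] := pselect (A t).
    by rewrite indic_in // subrr mul0r addr0 mul1r; exact: yh.
  by rewrite indic_notin // mul0r add0r subr0 mul1r.
move=> su; apply: filterS2 su ru => t su_t ru_t At.
by move: su_t; rewrite ru_t indic_in // subrr mul0r addr0 mul1r.
Qed.

End L0Calculus.

Section WeakGauge.
Context (d : measure_display) (T : measurableType d) (R : realType)
  (P : probability T R) (M : L0module P).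
Local Notation L0 := (L0 P).

Definition L0linear (mu : M -> L0) : Prop :=
  (forall x y, mu (eadd x y) = L0add (mu x) (mu y)) /\
  (forall r x, mu (esmul r x) = L0mul r (mu x)).

Lemma dual_L0linear (tau : set (set M)) mu : dual tau mu -> L0linear mu.
Proof. by case=> muD [muZ _]. Qed.

Section Linear.
Variables (mu : M -> L0) (mu_lin : L0linear mu).

Lemma rep_linearD x y :
  {ae P, forall t, rep (mu (eadd x y)) t = rep (mu x) t + rep (mu y) t}.
Proof. by rewrite mu_lin.1; exact: rep_add. Qed.

Lemma rep_linearZ r x :
  {ae P, forall t, rep (mu (esmul r x)) t = rep r t * rep (mu x) t}.
Proof. by rewrite mu_lin.2; exact: rep_mul. Qed.

Lemma rep_linear0 : {ae P, forall t, rep (mu (e0 M)) t = 0}.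
Proof.
apply: filterS (rep_linearD (e0 M) (e0 M)); rewrite eadd0 => t mu00.
by apply: (addrI (rep (mu (e0 M)) t)); rewrite addr0 -mu00.
Qed.

Lemma rep_linearN x : {ae P, forall t, rep (mu (eopp x)) t = - rep (mu x) t}.
Proof.
apply: filterS2 (rep_linearD (eopp x) x) rep_linear0; rewrite eaddN => t muN mu0.
by apply/eqP; rewrite -subr_eq0 opprK -mu0 muN.
Qed.

End Linear.

(* The paper's [sum_k 1_{A_k} ess sup_{mu in F_k} |mu z| <= h], with the essential
   suprema unfolded into a.s. bounds. *)
Definition weak_gauge_le (F : nat -> set (M -> L0)) (A : nat -> set T) (z : M)
    (h : T -> R) : Prop :=
  forall k, {ae P, forall t, A k t -> forall mu, F k mu -> `|rep (mu z) t| <= h t}.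

Definition finite_nonempty (F : nat -> set (M -> L0)) : Prop :=
  forall k, finite_set (F k) /\ F k !=set0.

Lemma L0linear_concat mu A (x : nat -> M) z : L0linear mu -> concatE A x z ->
  concatL0 A (fun k => mu (x k)) (mu z).
Proof. by move=> [_ muZ] zx k; rewrite -!muZ zx. Qed.

Lemma weak_gauge_le_trans (F : nat -> set (M -> L0)) A z (f g : T -> R) :
  weak_gauge_le F A z f -> {ae P, forall t, f t <= g t} -> weak_gauge_le F A z g.
Proof.
move=> zf fg k; apply: filterS2 (zf k) fg => t zf_t fg_t Akt mu Fmu.
exact: le_trans (zf_t Akt mu Fmu) fg_t.
Qed.

Lemma weak_gauge_le_coarsen (F F' : nat -> set (M -> L0)) A A' z h :
  (forall i, {ae P, forall t, A' i t -> exists n, A n t /\ F' i `<=` F n}) ->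
  weak_gauge_le F A z h -> weak_gauge_le F' A' z h.
Proof.
move=> cover zh i; apply: filterS2 (cover i) (ae_foralln zh) => t cov zh_t A'it mu F'mu.
by have [n [Ant F'F]] := cov A'it; exact: zh_t n Ant mu (F'F mu F'mu).
Qed.

Lemma weak_gauge_le_intro (F : nat -> set (M -> L0)) A z h : (forall k, finite_set (F k)) ->
  (forall k mu, F k mu -> {ae P, forall t, A k t -> `|rep (mu z) t| <= h t}) ->
  weak_gauge_le F A z h.
Proof.
move=> fF Fh k; have := ae_forall_countable (finite_set_countable (fF k)) (Fh k).
by apply: filterS => t Fh_t Akt mu Fmu; exact: Fh_t.
Qed.

Lemma esssup_weak_gauge (F : nat -> set (M -> L0)) z (s : nat -> L0) :
  (forall k, finite_set (F k)) ->
  (forall k, is_esssup [set L0abs (mu z) | mu in F k] (s k)) ->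
  forall k, {ae P, forall t mu, F k mu -> `|rep (mu z) t| <= rep (s k) t}.
Proof.
move=> fF sF k; apply: ae_forall_countable (finite_set_countable (fF k)) _ => mu Fmu.
have : L0le (L0abs (mu z)) (s k) by apply: (sF k).1; exists mu.
by apply: filterS2 (rep_abs (mu z)) => t <-.
Qed.

Lemma esssup_family_exists (F : nat -> set (M -> L0)) z : finite_nonempty F ->
  exists s : nat -> L0, forall k, is_esssup [set L0abs (mu z) | mu in F k] (s k).
Proof.
move=> fF; have /choice[s sF] : forall k, exists s : L0,
    is_esssup [set L0abs (mu z) | mu in F k] s.
  move=> k; have [finF [mu Fmu]] := fF k.
  apply: esssup_finite; first exact: finite_image.
  by exists (L0abs (mu z)), mu.
by exists s.
Qed.

Lemma concat_esssup_weak_gauge (F : nat -> set (M -> L0)) A z (s : nat -> L0) (y : L0) :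
  Defs.partition P A -> finite_nonempty F ->
  (forall k, is_esssup [set L0abs (mu z) | mu in F k] (s k)) ->
  concatL0 A s y -> weak_gauge_le F A z (rep y).
Proof.
move=> pA fF sF ys k.
have := esssup_weak_gauge (fun k => (fF k).1) sF k.
apply: filterS2 (concatL0_ae pA ys) => t ys_t sF_t Akt mu Fmu.
by rewrite (ys_t k Akt); exact: sF_t.
Qed.

Lemma weak_gauge_exists (F : nat -> set (M -> L0)) A z :
  Defs.partition P A -> finite_nonempty F ->
  exists G : L0, weak_gauge_le F A z (rep G).
Proof.
move=> pA fF; have [s sF] := esssup_family_exists z fF.
have [y ys] := concatL0_exists s pA.
by exists y; exact: concat_esssup_weak_gauge sF ys.
Qed.

Lemma UweakP (F : nat -> set (M -> L0)) A eps z : Defs.partition P A -> finite_nonempty F ->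
  Uweak F A eps z <-> exists h : L0, weak_gauge_le F A z (rep h) /\ L0lt h eps.
Proof.
move=> pA fF; split=> [[s [sF [y [ys y_eps]]]]|[h [zh h_eps]]].
  by exists y; split => //; exact: concat_esssup_weak_gauge sF ys.
have [s sF] := esssup_family_exists z fF; have [y ys] := concatL0_exists s pA.
exists s; split => //; exists y; split => //.
have sh k : {ae P, forall t, A k t -> rep (s k) t <= rep h t}.
  apply: (esssup_le_on (pA.1 k) (sF k)) => _ [mu Fmu <-].
  by apply: filterS2 (rep_abs (mu z)) (zh k) => t -> zh_t Akt; exact: zh_t.
apply: filterS (ae_and (ae_foralln sh)
  (ae_and (concatL0_ae pA ys) (ae_and (partition_cover pA) h_eps))).
move=> t [sh_t [ys_t [[k Akt] h_eps_t]]].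
by rewrite (ys_t k Akt); apply: le_lt_trans h_eps_t; exact: sh_t.
Qed.

End WeakGauge.

Section TranslationTopology.
Context (d : measure_display) (T : measurableType d) (R : realType)
  (P : probability T R) (M : L0module P) (B : set (set M)).

Lemma eaddx0 (x : M) : eadd x (e0 M) = x.
Proof. by rewrite eaddC eadd0. Qed.

Lemma eaddACA (x y u v : M) : eadd (eadd x u) (eadd y v) = eadd (eadd x y) (eadd u v).
Proof.
by rewrite -!eaddA; congr (eadd x _); rewrite !eaddA; congr (eadd _ v); exact: eaddC.
Qed.

Lemma eaddKN (x y : M) : eadd x (eadd y (eopp x)) = y.
Proof. by rewrite eaddC -eaddA eaddN eaddx0. Qed.

Hypothesis B0 : forall U, B U -> U (e0 M).
Hypothesis B_half : forall U, B U ->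
  exists2 V, B V & forall a b, V a -> V b -> U (eadd a b).
Hypothesis B_nonempty : B !=set0.
Hypothesis B_directed : forall U1 U2, B U1 -> B U2 ->
  exists2 U3, B U3 & U3 `<=` U1 `&` U2.

Definition translation_topology : set (set M) :=
  [set O | forall z, O z -> exists2 U, B U & forall u, U u -> O (eadd z u)].

Lemma nbhd_translationP x N : nbhd translation_topology x N <->
  exists2 U, B U & forall u, U u -> N (eadd x u).
Proof.
split=> [[Op [openO [Ox ON]]]|[U BU UN]].
  by have [U BU UO] := openO x Ox; exists U => // u Uu; apply: ON; exact: UO.
exists [set z | exists2 U, B U & forall u, U u -> N (eadd z u)]; split; [|split].
- move=> z [U' BU' U'N]; have [V BV VV] := B_half BU'.
  exists V => // v Vv; exists V => // w Vw.
  by rewrite -eaddA; apply: U'N; exact: VV.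
- by exists U.
- by move=> z [U' BU' U'N]; rewrite -(eaddx0 z); apply: U'N; exact: B0.
Qed.

Lemma translation_nbhd_base : nbhd_base translation_topology (e0 M) B.
Proof.
split=> [U BU|N /nbhd_translationP[U BU UN]].
  by apply/nbhd_translationP; exists U => // u Uu; rewrite eadd0.
by exists U => // u Uu; rewrite -(eadd0 u); exact: UN.
Qed.

Lemma translation_is_topology : is_topology translation_topology.
Proof.
split; [|split].
- by move=> z _; have [U BU] := B_nonempty; exists U.
- move=> G Gopen z [Op GO Oz]; have [U BU UO] := Gopen Op GO z Oz.
  by exists U => // u Uu; exists Op => //; exact: UO.
- move=> V1 V2 V1open V2open z [V1z V2z].
  have [U1 BU1 U1V] := V1open z V1z; have [U2 BU2 U2V] := V2open z V2z.
  have [U3 BU3 U3U] := B_directed BU1 BU2.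
  by exists U3 => // u /U3U[U1u U2u]; split; [exact: U1V | exact: U2V].
Qed.

Lemma translation_add_continuous x y W :
  nbhd translation_topology (eadd x y) W ->
  exists U V, nbhd translation_topology x U /\ nbhd translation_topology y V /\
    forall u v, U u -> V v -> W (eadd u v).
Proof.
move=> /nbhd_translationP[U BU UW]; have [V BV VV] := B_half BU.
exists [set a | exists2 v, V v & a = eadd x v], [set a | exists2 v, V v & a = eadd y v].
split; [|split].
- by apply/nbhd_translationP; exists V => // v Vv; exists v.
- by apply/nbhd_translationP; exists V => // v Vv; exists v.
- by move=> _ _ [v1 Vv1 ->] [v2 Vv2 ->]; rewrite eaddACA; apply: UW; exact: VV.
Qed.

End TranslationTopology.

Section WeakBase.
Context (d : measure_display) (T : measurableType d) (R : realType)
  (P : probability T R) (M : L0module P) (tau : set (set M)).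
Local Notation L0 := (L0 P).

Lemma weak_baseP U : weak_base tau U <-> exists F A (eps : L0),
  [/\ Defs.partition P A, finite_nonempty F, (forall k, F k `<=` dual tau),
      {ae P, forall t, 0 < rep eps t} & U = Uweak F A eps].
Proof.
split=> [[F [A [eps [pA FF eps0 ->]]]]|[F [A [eps [pA fF Fdual eps0 ->]]]]].
  exists F, A, eps; split => //; last exact/L0lt0P.
    by move=> k; have [_ ? ?] := FF k.
  by move=> k; have [? _ _] := FF k.
exists F, A, eps; split => //; last exact/L0lt0P.
by move=> k; have [? ?] := fF k; split => //; exact: Fdual.
Qed.

Lemma weak_gauge_le_dual (F : nat -> set (M -> L0)) A z h :
  finite_nonempty F -> (forall k, F k `<=` dual tau) ->
  (forall k mu, L0linear mu -> F k mu ->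
    {ae P, forall t, A k t -> `|rep (mu z) t| <= h t}) ->
  weak_gauge_le F A z h.
Proof.
move=> fF Fdual Fh; apply: weak_gauge_le_intro; first by move=> k; exact: (fF k).1.
by move=> k mu Fmu; exact: Fh (dual_L0linear (Fdual k mu Fmu)) Fmu.
Qed.

Lemma weak_base0 U : weak_base tau U -> U (e0 M).
Proof.
move=> /weak_baseP[F [A [eps [pA fF Fdual eps0 ->]]]].
apply/(UweakP _ _ pA fF); exists (L0zero P); split; last exact/L0lt0P.
apply: weak_gauge_le_dual fF Fdual _ => k mu mu_lin _.
apply: filterS2 (rep_linear0 mu_lin) (rep_zero P) => t -> -> _.
by rewrite normr0.
Qed.

Lemma weak_base_half U : weak_base tau U ->
  exists2 V, weak_base tau V & forall a b, V a -> V b -> U (eadd a b).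
Proof.
move=> /weak_baseP[F [A [eps [pA fF Fdual eps0 ->]]]].
pose eps2 := cls P (fun t => rep eps t / 2).
have r2 : {ae P, forall t, rep eps2 t = rep eps t / 2} by apply: rep_cls; solve_measurable.
exists (Uweak F A eps2).
  apply/weak_baseP; exists F, A, eps2; split => //.
  by apply: filterS2 r2 eps0 => t -> ?; lra.
move=> a b /(UweakP _ _ pA fF)[ha [aha ha2]] /(UweakP _ _ pA fF)[hb [bhb hb2]].
apply/(UweakP _ _ pA fF); exists (L0add ha hb); split.
  apply: weak_gauge_le_dual fF Fdual _ => k mu mu_lin Fmu.
  have := ae_and (aha k) (ae_and (bhb k) (ae_and (rep_linearD mu_lin a b) (rep_add ha hb))).
  apply: filterS => t [aha_t [bhb_t [-> ->]]] Akt.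
  by apply: le_trans (ler_normD _ _) _; apply: lerD; [exact: aha_t | exact: bhb_t].
apply: filterS (ae_and ha2 (ae_and hb2 (ae_and r2 (rep_add ha hb)))).
by move=> t [ha2_t [hb2_t [r2_t ->]]]; rewrite r2_t in ha2_t hb2_t; lra.
Qed.

Lemma weak_base_directed U1 U2 : weak_base tau U1 -> weak_base tau U2 ->
  exists2 U3, weak_base tau U3 & U3 `<=` U1 `&` U2.
Proof.
move=> /weak_baseP[F1 [A1 [e1 [pA1 fF1 F1dual e1pos ->]]]].
move=> /weak_baseP[F2 [A2 [e2 [pA2 fF2 F2dual e2pos ->]]]].
pose C := refine_partition A1 (fun=> A2).
pose F n := F1 (Cantor.of_nat n).1 `|` F2 (Cantor.of_nat n).2.
have FE i j : F (Cantor.to_nat (i, j)) = F1 i `|` F2 j by rewrite /F Cantor.cancel_of_to.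
have pC : Defs.partition P C by exact: partition_refine.
have fF : finite_nonempty F.
  move=> n; have [fin1 [mu F1mu]] := fF1 (Cantor.of_nat n).1.
  split; last by exists mu; left.
  by rewrite finite_setU; split => //; exact: (fF2 _).1.
pose e := cls P (fun t => Num.min (rep e1 t) (rep e2 t)).
have re : {ae P, forall t, rep e t = Num.min (rep e1 t) (rep e2 t)}.
  by apply: rep_cls; solve_measurable.
exists (Uweak F C e).
  apply/weak_baseP; exists F, C, e; split => //.
    by move=> n mu [F1mu|F2mu]; [exact: F1dual F1mu | exact: F2dual F2mu].
  apply: filterS (ae_and re (ae_and e1pos e2pos)) => t [-> [? ?]].
  by rewrite lt_min; apply/andP.
move=> z /(UweakP _ _ pC fF)[h [zh h_e]].
have h_e1 : L0lt h e1.
  apply: filterS2 h_e re => t h_e_t re_t.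
  by apply: lt_le_trans h_e_t _; rewrite re_t ge_min lexx.
have h_e2 : L0lt h e2.
  apply: filterS2 h_e re => t h_e_t re_t.
  by apply: lt_le_trans h_e_t _; rewrite re_t ge_min lexx orbT.
split.
- apply/(UweakP _ _ pA1 fF1); exists h; split => //.
  apply: weak_gauge_le_coarsen zh => i.
  apply: filterS (partition_cover pA2) => t [j A2jt] A1it.
  exists (Cantor.to_nat (i, j)); rewrite /C refine_partition_pair FE.
  by split => //; exact: subsetUl.
- apply/(UweakP _ _ pA2 fF2); exists h; split => //.
  apply: weak_gauge_le_coarsen zh => j.
  apply: filterS (partition_cover pA1) => t [i A1it] A2jt.
  exists (Cantor.to_nat (i, j)); rewrite /C refine_partition_pair FE.
  by split => //; exact: subsetUr.
Qed.

Lemma weak_base_nonempty : tau setT -> weak_base tau !=set0.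
Proof.
move=> tauT; pose A k : set T := if k is 0 then setT else set0.
pose zero : M -> L0 := fun=> L0zero P.
have pA : Defs.partition P A.
  apply: partitionP.
  - by case=> [|k]; [exact: measurableT | exact: measurable0].
  - by move=> [|i] [|j] ij //=; rewrite ?set0I ?setI0 measure0.
  - by apply: aeW => t; exists 0%N.
have zero_dual : dual tau zero.
  split; [|split].
  - move=> x y; apply: L0_ae_ext.
    apply: filterS2 (rep_zero P) (rep_add (L0zero P) (L0zero P)) => t z0 ->.
    by rewrite z0 addr0.
  - move=> r x; apply: L0_ae_ext.
    apply: filterS2 (rep_zero P) (rep_mul r (L0zero P)) => t z0 ->.
    by rewrite z0 mulr0.
  - move=> x N [eps [eps0 epsN]]; exists setT; split => //; split => // y _.
    apply: epsN; set z := L0zero P.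
    have := ae_and ((L0lt0P eps).1 eps0) (ae_and (rep_abs (L0add z (L0opp z)))
      (ae_and (rep_add z (L0opp z)) (ae_and (rep_opp z) (rep_zero P)))).
    by apply: filterS => t [eps_t [-> [-> [-> ->]]]]; rewrite oppr0 addr0 normr0 ltW.
exists (Uweak (fun=> [set zero]) A (L0one P)); apply/weak_baseP.
exists (fun=> [set zero]), A, (L0one P); split => //.
- by move=> k; split; [exact: finite_set1 | exists zero].
- by move=> k mu ->.
- by apply: filterS (rep_one P) => t ->; exact: ltr01.
Qed.

End WeakBase.

Section WeakBaseShape.
Context (d : measure_display) (T : measurableType d) (R : realType)
  (P : probability T R) (M : L0module P) (tau : set (set M)).
Local Notation L0 := (L0 P).

Lemma weak_base_balanced U : weak_base tau U -> L0balanced U.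
Proof.
move=> /weak_baseP[F [A [eps [pA fF Fdual _ ->]]]] x lam.
move=> /(UweakP _ _ pA fF)[h [xh h_eps]] lam1.
apply/(UweakP _ _ pA fF); exists h; split => //.
apply: weak_gauge_le_dual fF Fdual _ => k mu mu_lin Fmu.
have := ae_and (rep_linearZ mu_lin lam x)
  (ae_and (xh k) (ae_and lam1 (ae_and (rep_abs lam) (rep_one P)))).
apply: filterS => t [-> [xh_t [lam1_t [abs_t one_t]]]] Akt.
rewrite abs_t one_t in lam1_t; rewrite normrM.
by apply: le_trans (xh_t Akt mu Fmu); rewrite ler_piMl.
Qed.

Lemma weak_base_convex U : weak_base tau U -> L0convex U.
Proof.
move=> /weak_baseP[F [A [eps [pA fF Fdual _ ->]]]] x y lam.
move=> /(UweakP _ _ pA fF)[hx [xhx hx_eps]] /(UweakP _ _ pA fF)[hy [yhy hy_eps]].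
move=> lam0 lam1; set mlam := L0add (L0one P) (L0opp lam).
have rmlam : {ae P, forall t, rep mlam t = 1 - rep lam t}.
  have := ae_and (rep_add (L0one P) (L0opp lam)) (ae_and (rep_opp lam) (rep_one P)).
  by apply: filterS => t [-> [-> ->]].
have lam01 : {ae P, forall t, 0 <= rep lam t <= 1}.
  apply: filterS (ae_and lam0 (ae_and lam1 (ae_and (rep_one P) (rep_zero P)))).
  by move=> t [l0 [l1 [one_t zero_t]]]; rewrite -zero_t -one_t l0 l1.
pose h := cls P (fun t => rep lam t * rep hx t + (1 - rep lam t) * rep hy t).
have rh : {ae P, forall t, rep h t = rep lam t * rep hx t + (1 - rep lam t) * rep hy t}.
  by apply: rep_cls; solve_measurable.
apply/(UweakP _ _ pA fF); exists h; split.
  apply: weak_gauge_le_dual fF Fdual _ => k mu mu_lin Fmu.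
  have := ae_and (rep_linearD mu_lin (esmul lam x) (esmul mlam y))
    (ae_and (rep_linearZ mu_lin lam x) (ae_and (rep_linearZ mu_lin mlam y)
    (ae_and rmlam (ae_and rh (ae_and lam01 (ae_and (xhx k) (yhy k))))))).
  apply: filterS => t [-> [-> [-> [-> [-> [lam01_t [xhx_t yhy_t]]]]]]] Akt.
  exact: norm_convex_comb_le lam01_t (xhx_t Akt mu Fmu) (yhy_t Akt mu Fmu).
apply: filterS (ae_and rh (ae_and lam01 (ae_and hx_eps hy_eps))).
by move=> t [-> [lam01_t [? ?]]]; exact: convex_comb_lt.
Qed.

Lemma weak_base_absorbing U : weak_base tau U -> L0absorbing U.
Proof.
move=> /weak_baseP[F [A [eps [pA fF Fdual eps0 ->]]]] x.
have [G xG] := weak_gauge_exists x pA fF.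
have G0 t : 0 <= Num.max (rep G t) 0 by rewrite le_max lexx orbT.
pose lam := cls P (fun t => 2 * (Num.max (rep G t) 0 + 1) / rep eps t).
pose lam' := cls P (fun t => rep eps t / (2 * (Num.max (rep G t) 0 + 1))).
have rlam : {ae P, forall t, rep lam t = 2 * (Num.max (rep G t) 0 + 1) / rep eps t}.
  by apply: rep_cls; solve_measurable.
have rlam' : {ae P, forall t, rep lam' t = rep eps t / (2 * (Num.max (rep G t) 0 + 1))}.
  by apply: rep_cls; solve_measurable.
exists lam; split.
  apply/L0lt0P; apply: filterS2 rlam eps0 => t -> eps_t.
  by rewrite divr_gt0 //; have := G0 t; lra.
exists (esmul lam' x); last first.
  rewrite -esmulA -[LHS]esmul1; congr esmul; apply: L0_ae_ext.
  have := ae_and (rep_one P) (ae_and (rep_mul lam lam') (ae_and rlam (ae_and rlam' eps0))).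
  apply: filterS => t [-> [-> [-> [-> eps_t]]]].
  have c0 : 2 * (Num.max (rep G t) 0 + 1) != 0 by apply: lt0r_neq0; have := G0 t; lra.
  by rewrite mulrA divfK ?mulfV // lt0r_neq0.
pose h := cls P (fun t => rep lam' t * Num.max (rep G t) 0).
have rh : {ae P, forall t, rep h t = rep lam' t * Num.max (rep G t) 0}.
  by apply: rep_cls; solve_measurable.
apply/(UweakP _ _ pA fF); exists h; split.
  apply: weak_gauge_le_dual fF Fdual _ => k mu mu_lin Fmu.
  have := ae_and (rep_linearZ mu_lin lam' x) (ae_and rh (ae_and (xG k) (ae_and rlam' eps0))).
  apply: filterS => t [-> [-> [xG_t [lam'_t eps_t]]]] Akt.
  have lam'0 : 0 <= rep lam' t by rewrite lam'_t divr_ge0 ?ltW //; have := G0 t; lra.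
  rewrite normrM ger0_norm // ler_wpM2l //.
  by apply: le_trans (xG_t Akt mu Fmu) _; rewrite le_max lexx.
apply: filterS (ae_and rh (ae_and rlam' eps0)) => t [-> [-> eps_t]].
exact: scaled_gauge_lt eps_t (G0 t).
Qed.

Lemma weak_base_stable U : weak_base tau U -> stable_set U.
Proof.
move=> /weak_baseP[F [A [eps [pA fF Fdual _ ->]]]] B x z pB Ux zx.
have /choice[h xh] : forall k, exists h : L0,
    weak_gauge_le F A (x k) (rep h) /\ L0lt h eps.
  by move=> k; apply/(UweakP _ _ pA fF).
have [y yh] := concatL0_exists h pB.
apply/(UweakP _ _ pA fF); exists y; split.
  apply: weak_gauge_le_dual fF Fdual _ => j mu mu_lin Fmu.
  have := ae_and (partition_cover pB) (ae_and (concatL0_ae pB yh)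
    (ae_and (concatL0_ae pB (L0linear_concat mu_lin zx)) (ae_foralln (fun k => (xh k).1 j)))).
  apply: filterS => t [[k Bkt] [yh_t [zx_t xh_t]]] Ajt.
  by rewrite (zx_t k Bkt) (yh_t k Bkt); exact: xh_t.
have := ae_and (partition_cover pB)
  (ae_and (concatL0_ae pB yh) (ae_foralln (fun k => (xh k).2))).
by apply: filterS => t [[k Bkt] [yh_t xh_t]]; rewrite (yh_t k Bkt); exact: xh_t.
Qed.

End WeakBaseShape.

Section WeakBaseConcat.
Context (d : measure_display) (T : measurableType d) (R : realType)
  (P : probability T R) (M : L0module P) (tau : set (set M)).
Local Notation L0 := (L0 P).
Variables (A : nat -> set T) (F : nat -> nat -> set (M -> L0))
  (B : nat -> nat -> set T) (e : nat -> L0) (eps : L0).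
Hypotheses (pA : Defs.partition P A) (pB : forall k, Defs.partition P (B k))
  (fF : forall k, finite_nonempty (F k)) (Fdual : forall k j, F k j `<=` dual tau)
  (e_pos : forall k, {ae P, forall t, 0 < rep (e k) t}) (eps_e : concatL0 A e eps).

Let C := refine_partition A B.
Let G n := F (Cantor.of_nat n).1 (Cantor.of_nat n).2.

Let pC : Defs.partition P C. Proof. exact: partition_refine. Qed.
Let fG : finite_nonempty G. Proof. by move=> n; exact: fF. Qed.
Let Gdual n : G n `<=` dual tau. Proof. exact: Fdual. Qed.

Lemma concat_Uweak_sub :
  concat_sets A (fun k => Uweak (F k) (B k) (e k)) `<=` Uweak G C eps.
Proof.
move=> z [x [xU zx]].
have /choice[h xh] : forall k, exists h : L0,
    weak_gauge_le (F k) (B k) (x k) (rep h) /\ L0lt h (e k).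
  by move=> k; apply/(UweakP _ _ (pB k) (fF k)); exact: xU.
have [y yh] := concatL0_exists h pA.
apply/(UweakP _ _ pC fG); exists y; split.
  apply: weak_gauge_le_dual fG Gdual _ => n mu mu_lin Gmu.
  rewrite /G /C /refine_partition in Gmu *.
  case: (Cantor.of_nat n) Gmu => i j /= Fmu.
  have := ae_and (concatL0_ae pA yh)
    (ae_and (concatL0_ae pA (L0linear_concat mu_lin zx)) ((xh i).1 j)).
  apply: filterS => t [yh_t [zx_t xh_t]] [Ait Bijt].
  by rewrite (zx_t i Ait) (yh_t i Ait); exact: xh_t.
have := ae_and (partition_cover pA) (ae_and (concatL0_ae pA yh)
  (ae_and (concatL0_ae pA eps_e) (ae_foralln (fun k => (xh k).2)))).
apply: filterS => t [[k Akt] [yh_t [eps_t xh_t]]].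
by rewrite (yh_t k Akt) (eps_t k Akt); exact: xh_t.
Qed.

Lemma Uweak_sub_concat :
  Uweak G C eps `<=` concat_sets A (fun k => Uweak (F k) (B k) (e k)).
Proof.
move=> z /(UweakP _ _ pC fG)[h [zh h_eps]].
exists (fun k => esmul (L0ind P (A k)) z); split; last first.
  move=> k; rewrite -esmulA; congr esmul; apply: L0_ae_ext.
  apply: filterS2 (rep_mul (L0ind P (A k)) (L0ind P (A k))) (rep_ind P (pA.1 k)).
  move=> t -> ->; have [Akt|nAkt] := pselect (A k t).
    by rewrite indic_in // mulr1.
  by rewrite indic_notin // mulr0.
move=> k; pose hk := cls P (fun t => \1_(A k) t * rep h t).
have rhk : {ae P, forall t, rep hk t = \1_(A k) t * rep h t}.
  by apply: rep_cls; solve_measurable; exact: pA.1.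
apply/(UweakP _ _ (pB k) (fF k)); exists hk; split.
  apply: weak_gauge_le_dual (fF k) (@Fdual k) _ => j mu mu_lin Fmu.
  have := zh (Cantor.to_nat (k, j)).
  rewrite /C refine_partition_pair /G Cantor.cancel_of_to /= => zh_kj.
  have := ae_and zh_kj (ae_and rhk
    (ae_and (rep_linearZ mu_lin (L0ind P (A k)) z) (rep_ind P (pA.1 k)))).
  apply: filterS => t [zh_t [-> [-> ->]]] Bkjt.
  have [Akt|nAkt] := pselect (A k t); last by rewrite indic_notin // !mul0r normr0.
  by rewrite indic_in // !mul1r; exact: zh_t.
have := ae_and rhk (ae_and h_eps (ae_and (concatL0_ae pA eps_e) (e_pos k))).
apply: filterS => t [-> [h_eps_t [eps_t e_t]]].
have [Akt|nAkt] := pselect (A k t); last by rewrite indic_notin // mul0r.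
by rewrite indic_in // mul1r -(eps_t k Akt).
Qed.

Lemma weak_base_concat_sets :
  weak_base tau (concat_sets A (fun k => Uweak (F k) (B k) (e k))).
Proof.
have -> : concat_sets A (fun k => Uweak (F k) (B k) (e k)) = Uweak G C eps.
  by apply/seteqP; split; [exact: concat_Uweak_sub | exact: Uweak_sub_concat].
apply/weak_baseP; exists G, C, eps; split => //.
have := ae_and (partition_cover pA) (ae_and (concatL0_ae pA eps_e) (ae_foralln e_pos)).
by apply: filterS => t [[k Akt] [eps_t e_t]]; rewrite (eps_t k Akt).
Qed.

End WeakBaseConcat.

Lemma weak_base_stable_collection d (T : measurableType d) (R : realType)
    (P : probability T R) (M : L0module P) (tau : set (set M)) :
  stable_collection (weak_base tau).
Proof.
split=> [U|A S pA SB]; first exact: weak_base_stable.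
have /choice[p Sp] : forall k, exists p : (nat -> set (M -> L0 P)) * (nat -> set T) * L0 P,
    [/\ Defs.partition P p.1.2, finite_nonempty p.1.1, (forall j, p.1.1 j `<=` dual tau),
        {ae P, forall t, 0 < rep p.2 t} & S k = Uweak p.1.1 p.1.2 p.2].
  by move=> k; have /weak_baseP[F [B [e FBe]]] := SB k; exists (F, B, e).
have [eps eps_e] := concatL0_exists (fun k => (p k).2) pA.
have -> : S = fun k => Uweak (p k).1.1 (p k).1.2 (p k).2.
  by apply: funext => k; have [] := Sp k.
by apply: weak_base_concat_sets pA _ _ _ _ eps_e => k; have [] := Sp k.
Qed.

Section WeakScalarContinuity.
Context (d : measure_display) (T : measurableType d) (R : realType)
  (P : probability T R) (M : L0module P) (tau : set (set M)).
Local Notation L0 := (L0 P).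

Lemma weak_gauge_le_smul_perturb (F : nat -> set (M -> L0)) A (x v : M) (r s G hv delta : L0) :
  finite_nonempty F -> (forall k, F k `<=` dual tau) ->
  weak_gauge_le F A x (rep G) -> weak_gauge_le F A v (rep hv) ->
  L0le (L0abs (L0add s (L0opp r))) delta ->
  weak_gauge_le F A (eadd (esmul s (eadd x v)) (eopp (esmul r x)))
    (fun t => rep delta t * Num.max (rep G t) 0 +
              (`|rep r t| + rep delta t) * Num.max (rep hv t) 0).
Proof.
move=> fF Fdual xG vhv sr; apply: weak_gauge_le_dual fF Fdual _ => k mu mu_lin Fmu.
have := ae_and (rep_linearD mu_lin (esmul s (eadd x v)) (eopp (esmul r x)))
  (ae_and (rep_linearZ mu_lin s (eadd x v)) (ae_and (rep_linearD mu_lin x v)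
  (ae_and (rep_linearN mu_lin (esmul r x)) (ae_and (rep_linearZ mu_lin r x)
  (ae_and (xG k) (ae_and (vhv k) (ae_and sr (ae_and (rep_abs (L0add s (L0opp r)))
  (ae_and (rep_add s (L0opp r)) (rep_opp r)))))))))).
apply: filterS => t [-> [-> [-> [-> [-> [xG_t [vhv_t [sr_t [abs_t [add_t opp_t]]]]]]]]]] Akt.
rewrite abs_t add_t opp_t in sr_t; apply: norm_perturbed_product_le sr_t _ _.
  by apply: le_trans (xG_t Akt mu Fmu) _; rewrite le_max lexx.
by apply: le_trans (vhv_t Akt mu Fmu) _; rewrite le_max lexx.
Qed.

Local Notation sigma := (translation_topology (weak_base tau)).

Lemma weak_smul_continuous r x W : nbhd sigma (esmul r x) W ->
  exists N V, L0nbhd r N /\ nbhd sigma x V /\ forall s z, N s -> V z -> W (esmul s z).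
Proof.
move=> /(nbhd_translationP (@weak_base0 _ _ _ _ _ tau) (@weak_base_half _ _ _ _ _ tau)).
move=> [_ /weak_baseP[F [A [eps [pA fF Fdual eps0 ->]]]] UW].
have [G xG] := weak_gauge_exists x pA fF.
have G0 t : 0 <= Num.max (rep G t) 0 by rewrite le_max lexx orbT.
pose delta := cls P (fun t => Num.min 1 (rep eps t / (2 * (Num.max (rep G t) 0 + 1)))).
pose eta := cls P (fun t => rep eps t / (2 * (`|rep r t| + 2))).
have rdelta : {ae P, forall t,
    rep delta t = Num.min 1 (rep eps t / (2 * (Num.max (rep G t) 0 + 1)))}.
  by apply: rep_cls; solve_measurable.
have reta : {ae P, forall t, rep eta t = rep eps t / (2 * (`|rep r t| + 2))}.
  by apply: rep_cls; solve_measurable.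
exists [set s | L0le (L0abs (L0add s (L0opp r))) delta].
exists [set a | exists2 v, Uweak F A eta v & a = eadd x v].
split; [|split].
- exists delta; split => //; apply/L0lt0P; apply: filterS2 rdelta eps0 => t -> eps_t.
  by rewrite lt_min ltr01 divr_gt0 //; have := G0 t; lra.
- apply/(nbhd_translationP (@weak_base0 _ _ _ _ _ tau) (@weak_base_half _ _ _ _ _ tau)).
  exists (Uweak F A eta); last by move=> v Uv; exists v.
  apply/weak_baseP; exists F, A, eta; split => //.
  by apply: filterS2 reta eps0 => t -> eps_t; rewrite divr_gt0 //; lra.
move=> s _ sr [v /(UweakP _ _ pA fF)[hv [vhv hv_eta]] ->].
rewrite -(eaddKN (esmul r x) (esmul s (eadd x v))); apply: UW.
pose h := cls P (fun t => rep delta t * Num.max (rep G t) 0 +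
  (`|rep r t| + rep delta t) * Num.max (rep hv t) 0).
have rh : {ae P, forall t, rep h t = rep delta t * Num.max (rep G t) 0 +
    (`|rep r t| + rep delta t) * Num.max (rep hv t) 0}.
  by apply: rep_cls; solve_measurable.
apply/(UweakP _ _ pA fF); exists h; split.
  apply: weak_gauge_le_trans (weak_gauge_le_smul_perturb fF Fdual xG vhv sr) _.
  by apply: filterS rh => t ->.
apply: filterS (ae_and rh (ae_and rdelta (ae_and reta (ae_and hv_eta eps0)))).
move=> t [-> [-> [eta_t [hv_t eps_t]]]]; rewrite eta_t in hv_t.
apply: perturbed_product_bound_lt => //; first by rewrite le_max lexx orbT.
by rewrite gt_max hv_t divr_gt0 //; lra.
Qed.

End WeakScalarContinuity.

Theorem mainTheorem3 (d : measure_display) (T : measurableType d)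
  (R : realType) (P : probability T R) (M : L0module P)
  (tau : set (set (Ecar M))) :
  stable_locally_L0convex tau ->
  exists sigma : set (set (Ecar M)),
    stable_locally_L0convex sigma /\ nbhd_base sigma (e0 M) (weak_base tau).
Proof.
move=> [[[tauT _] _] [Mccp _]].
have B0 := @weak_base0 _ _ _ _ _ tau; have Bhalf := @weak_base_half _ _ _ _ _ tau.
exists (translation_topology (weak_base tau)).
split; last exact: translation_nbhd_base B0 Bhalf.
split; [split; [|split] | split => //].
- by apply: translation_is_topology; [exact: weak_base_nonempty | exact: weak_base_directed].
- exact: translation_add_continuous B0 Bhalf.
- exact: weak_smul_continuous.
- exists (weak_base tau); split; first exact: translation_nbhd_base B0 Bhalf.
  split; first exact: weak_base_stable_collection.
  move=> U BU; split; first exact: weak_base_convex BU.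
    exact: weak_base_absorbing BU.
  exact: weak_base_balanced BU.
Qed.
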